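(* Let $\Gamma$ be a group and $\Delta$ a finite set of distinct elements generating $\Gamma$. If there exists a homogeneous scalar quantum walk on the Cayley graph $C_\Delta(\Gamma)$, then for every ordered pair $(\delta_1,\delta_2)$ of distinct elements of $\Delta$ there exists an ordered pair $(\delta_3,\delta_4)\neq(\delta_1,\delta_2)$ of elements of $\Delta$ such that $\delta_1\delta_2^{-1}=\delta_3\delta_4^{-1}$.
   Context: The Cayley graph $C_\Delta(\Gamma)$ has vertex set $\Gamma$ and directed edges $(g,g\delta)$ for $g\in\Gamma$, $\delta\in\Delta$. Let $\ell^2(\Gamma)$ have orthonormal basis $\{|g\rangle\}_{g\in\Gamma}$, and for $\delta\in\Gamma$ let $U_\delta$ be the unitary operator on $\ell^2(\Gamma)$ with $U_\delta|g\rangle=|g\delta\rangle$. A homogeneous scalar quantum walk on $C_\Delta(\Gamma)$ is a unitary operator $W=\sum_{\delta\in\Delta}W_\delta U_\delta$ on $\ell^2(\Gamma)$ with complex coefficients $W_\delta$ that are all nonzero (a vanishing coefficient would amount to removing the edges labeled by that generator). *)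

From mathcomp Require Import all_boot all_order all_algebra.
From mathcomp Require Import all_classical all_reals.
From mathcomp Require Import esum.
From mathcomp Require Import complex.
Set Implicit Arguments. Unset Strict Implicit. Unset Printing Implicit Defensive.
Import Order.TTheory GRing.Theory Num.Theory.
Local Open Scope classical_set_scope.
Local Open Scope ring_scope.

Definition is_group (G : Type) (mul : G -> G -> G) (one : G) (inv : G -> G)
  : Prop :=
  [/\ forall x y z, mul x (mul y z) = mul (mul x y) z,
      forall x, mul one x = x, forall x, mul x one = x,
      forall x, mul (inv x) x = one & forall x, mul x (inv x) = one].

Definition generates (G : Type) (mul : G -> G -> G) (one : G) (inv : G -> G)
  (Delta : set G) : Prop :=
  forall H : set G,
    H one -> (forall x y, H x -> H y -> H (mul x y)) ->
    (forall x, H x -> H (inv x)) -> Delta `<=` H -> H = setT.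

Definition cnorm2 (R : rcfType) (z : R[i]) : R :=
  complex.Re z ^+ 2 + complex.Im z ^+ 2.

Definition l2norm2 (R : realType) (G : choiceType) (f : G -> R[i]) : \bar R :=
  \esum_(g in setT) ((cnorm2 (f g))%:E).

Definition in_l2 (R : realType) (G : choiceType) (f : G -> R[i]) : Prop :=
  (l2norm2 f < +oo)%E.

(* The operator W = \sum_(d in Delta) W_d U_d acting on functions
   f = \sum_h f(h) |h>, where U_d |h> = |h d>:
   (W f)(g) = \sum_(d in Delta) W_d f(g d^-1). *)
Definition walk_op (R : realType) (G : choiceType) (mul : G -> G -> G)
  (inv : G -> G) (Delta : seq G) (W : G -> R[i]) (f : G -> R[i]) : G -> R[i] :=
  fun g => \sum_(d <- Delta) W d * f (mul g (inv d)).

(* W is a unitary operator on l^2(G): it maps l^2(G) into itself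
   isometrically and onto l^2(G) (W is linear by construction). *)
Definition unitary_on_l2 (R : realType) (G : choiceType)
  (T : (G -> R[i]) -> (G -> R[i])) : Prop :=
  (forall f, in_l2 f -> in_l2 (T f) /\ l2norm2 (T f) = l2norm2 f) /\
  (forall f, in_l2 f -> exists h, in_l2 h /\ T h = f).

Definition homogeneous_scalar_QW (R : realType) (G : choiceType)
  (mul : G -> G -> G) (inv : G -> G) (Delta : seq G) (W : G -> R[i]) : Prop :=
  (forall d, d \in Delta -> W d != 0) /\
  unitary_on_l2 (walk_op mul inv Delta W).

From mathcomp Require Import all_boot all_order all_algebra.
From mathcomp Require Import all_classical all_reals.
From mathcomp Require Import complex.
From mathcomp Require Import esum.
From mathcomp Require Import ring lra.
Set Implicit Arguments. Unset Strict Implicit. Unset Printing Implicit Defensive.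
Import Order.TTheory GRing.Theory Num.Theory.
Local Open Scope ring_scope.

(* Suppose a = d1 d2^-1 had no other representation d3 d4^-1 with d3, d4 in
   Delta.  Then W|1> and W|a> are supported on Delta and a Delta, which meet
   only at d1 = a d2.  For f = conj(W_d1)|1> + conj(W_d2)|a> both images take
   the positive values |W_d1|^2 and |W_d2|^2 at d1, so the interference term
   2 |W_d1|^2 |W_d2|^2 makes ||W f||^2 strictly larger than
   ||f||^2 = ||W conj(W_d1)|1>||^2 + ||W conj(W_d2)|a>||^2, contradicting
   unitarity. *)

Section GroupFacts.
Variables (G : eqType) (mul : G -> G -> G) (one : G) (inv : G -> G).
Hypothesis mulG : is_group mul one inv.

Lemma group_mulgI x : injective (mul x).
Proof.
case: mulG => mA m1 _ mV _ y z e.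
by rewrite -[y]m1 -(mV x) -mA e mA mV m1.
Qed.

Lemma group_divg_eq g x d : (mul g (inv d) == x) = (g == mul x d).
Proof.
case: mulG => mA _ m1r mV mVr.
by apply/eqP/eqP => [<-|->]; rewrite -mA ?mV ?mVr m1r.
Qed.

End GroupFacts.

Section SquareSummable.
Variables (R : realType) (G : choiceType).

Lemma cnorm2_ge0 (z : R[i]) : 0 <= cnorm2 z.
Proof. by rewrite addr_ge0 ?sqr_ge0. Qed.

Lemma cnorm20 : cnorm2 (0 : R[i]) = 0.
Proof. by rewrite /cnorm2 /= expr0n addr0. Qed.

Lemma cnorm2_gt0 (z : R[i]) : (0 < cnorm2 z) = (z != 0).
Proof.
case: z => p q; rewrite lt0r cnorm2_ge0 andbT /cnorm2 /=.
by rewrite paddr_eq0 ?sqr_ge0 // !sqrf_eq0 eq_complex.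
Qed.

Lemma cnorm2J (z : R[i]) : cnorm2 z^*%C = cnorm2 z.
Proof. by case: z => p q; rewrite /cnorm2 /= sqrrN. Qed.

Lemma mulcJ_cnorm2 (z : R[i]) : z * z^*%C = ((cnorm2 z)%:C)%C.
Proof.
case: z => p q; apply/eqP; rewrite eq_complex /cnorm2 /=.
by apply/andP; split; apply/eqP; ring.
Qed.

Definition pointmass (x : G) (z : R[i]) : G -> R[i] :=
  fun g => if g == x then z else 0.

Lemma esum_pointmass (x : G) (r : R) : 0 <= r ->
  (\esum_(g in setT) (if g == x then r else 0)%:E = r%:E)%E.
Proof.
move=> r0.
transitivity (\esum_(g in [set x]) (if g == x then r else 0)%:E)%E; last first.
  by rewrite esum_set1 eqxx // lee_fin.
rewrite [RHS]esum_mkcond; apply: eq_esum => g _.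
by case: eqP => [->|ne]; [rewrite mem_set | rewrite memNset].
Qed.

Lemma l2norm2_pointmass (x : G) (z : R[i]) :
  l2norm2 (pointmass x z) = (cnorm2 z)%:E.
Proof.
rewrite -(@esum_pointmass x _ (cnorm2_ge0 z)); apply: eq_esum => g _.
by rewrite /pointmass; case: eqP => // _; rewrite cnorm20.
Qed.

Lemma in_l2_pointmass (x : G) (z : R[i]) : in_l2 (pointmass x z).
Proof. by rewrite /in_l2 l2norm2_pointmass ltry. Qed.

Lemma l2norm2D_overlap1 (f h : G -> R[i]) (x : G) (c : R) :
  (forall g, g != x -> f g = 0 \/ h g = 0) -> 0 <= c ->
  cnorm2 (f x + h x) = cnorm2 (f x) + cnorm2 (h x) + c ->
  l2norm2 (f \+ h) = (l2norm2 f + l2norm2 h + c%:E)%E.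
Proof.
move=> fh0 c0 fhx.
have cross g : cnorm2 (f g + h g) =
    cnorm2 (f g) + cnorm2 (h g) + (if g == x then c else 0).
  by case: eqVneq => [->//|/fh0[]->]; rewrite cnorm20 ?add0r ?addr0.
rewrite /l2norm2 -(@esum_pointmass x _ c0) -!esumD => [|g _|g _|g _|g _].
- by apply: eq_esum => g _; rewrite /= cross !EFinD.
- by rewrite adde_ge0 // lee_fin cnorm2_ge0.
- by rewrite lee_fin; case: eqP.
- by rewrite lee_fin cnorm2_ge0.
- by rewrite lee_fin cnorm2_ge0.
Qed.

End SquareSummable.

Section WalkOnPointMasses.
Variables (R : realType) (G : choiceType) (mul : G -> G -> G) (one : G).
Variables (inv : G -> G) (Delta : seq G) (W : G -> R[i]).
Hypotheses (mulG : is_group mul one inv) (Delta_uniq : uniq Delta).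
Local Notation T := (walk_op mul inv Delta W).

Lemma walk_opD (f h : G -> R[i]) : T (f \+ h) = T f \+ T h.
Proof.
apply/funext => g; rewrite /walk_op /= -big_split /=.
by apply: eq_bigr => d _; rewrite mulrDr.
Qed.

Lemma walk_op_pointmass x z g :
  T (pointmass x z) g = \sum_(d <- Delta | g == mul x d) W d * z.
Proof.
rewrite /walk_op (bigID (fun d => g == mul x d)) /= addrC big1 ?add0r => [|d].
  by apply: eq_bigr => d gd; rewrite /pointmass (group_divg_eq mulG) gd.
by rewrite /pointmass (group_divg_eq mulG) => /negbTE->; rewrite mulr0.
Qed.

Lemma walk_op_pointmass_mul x z d :
  d \in Delta -> T (pointmass x z) (mul x d) = W d * z.
Proof.
move=> dD; rewrite walk_op_pointmass.
under eq_bigl do rewrite (inj_eq (group_mulgI mulG (x := x))) eq_sym.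
by rewrite -big_filter filter_pred1_uniq // big_seq1.
Qed.

Lemma walk_op_pointmass_eq0 x z g :
  ~~ has (fun d => g == mul x d) Delta -> T (pointmass x z) g = 0.
Proof. by move=> nDg; rewrite walk_op_pointmass big_hasC. Qed.

Lemma walk_op_not_isometry d1 d2 :
  (forall d, d \in Delta -> W d != 0) ->
  d1 \in Delta -> d2 \in Delta -> d1 != d2 ->
  (forall d3 d4, d3 \in Delta -> d4 \in Delta ->
     mul d3 (inv d4) = mul d1 (inv d2) -> d3 = d1) ->
  ~ (forall f, in_l2 f -> l2norm2 (T f) = l2norm2 f).
Proof.
move=> W_neq0 d1D d2D d12 a_unique isoT.
have [_ mul1g _ _ _] := mulG.
set a := mul d1 (inv d2).
have d1E : d1 = mul a d2 by apply/eqP; rewrite -(group_divg_eq mulG).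
have a_neq1 : a != one by rewrite /a (group_divg_eq mulG) mul1g.
pose f1 := pointmass one (W d1)^*%C; pose f2 := pointmass a (W d2)^*%C.
pose n1 := cnorm2 (W d1); pose n2 := cnorm2 (W d2).
have Tf1_d1 : T f1 d1 = (n1%:C)%C.
  by rewrite -{1}[d1]mul1g walk_op_pointmass_mul // mulcJ_cnorm2.
have Tf2_d1 : T f2 d1 = (n2%:C)%C.
  by rewrite {1}d1E walk_op_pointmass_mul // mulcJ_cnorm2.
have T_disjoint g : g != d1 -> T f1 g = 0 \/ T f2 g = 0.
  move=> gd1.
  have [/hasP[d3 d3D /eqP g3]|] := boolP (has (fun d => g == mul one d) Delta);
    last by left; apply: walk_op_pointmass_eq0.
  right; apply: walk_op_pointmass_eq0; apply/hasP => -[d4 d4D g4].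
  move: gd1 g4; rewrite g3 mul1g -(group_divg_eq mulG).
  by move=> + /eqP /(a_unique _ _ d3D d4D) d3E; rewrite d3E eqxx.
have T_pointmass x z : l2norm2 (T (pointmass x z)) = (cnorm2 z)%:E.
  by rewrite isoT ?l2norm2_pointmass //; apply: in_l2_pointmass.
have src : l2norm2 (f1 \+ f2) = (n1 + n2)%:E.
  rewrite (@l2norm2D_overlap1 _ _ _ _ one 0) //.
  - by rewrite !l2norm2_pointmass !cnorm2J -!EFinD addr0.
  - by move=> g /negbTE g1; left; rewrite /f1 /pointmass g1.
  - by rewrite /f2 /pointmass eq_sym (negbTE a_neq1) cnorm20 !addr0.
have img : l2norm2 (T (f1 \+ f2)) = (n1 + n2 + 2 * n1 * n2)%:E.
  rewrite walk_opD (@l2norm2D_overlap1 _ _ _ _ d1 (2 * n1 * n2)) //.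
  - by rewrite !T_pointmass !cnorm2J !EFinD.
  - by rewrite !mulr_ge0 ?cnorm2_ge0.
  - by rewrite Tf1_d1 Tf2_d1 /cnorm2 /=; ring.
have n1_gt0 : 0 < n1 by rewrite cnorm2_gt0 W_neq0.
have n2_gt0 : 0 < n2 by rewrite cnorm2_gt0 W_neq0.
have := isoT (f1 \+ f2); rewrite img src /in_l2 src ltry => /(_ isT) [].
by nra.
Qed.

End WalkOnPointMasses.

Theorem proposition2 (R : realType) (G : choiceType)
  (mul : G -> G -> G) (one : G) (inv : G -> G) (Delta : seq G) :
  is_group mul one inv ->
  uniq Delta ->
  generates mul one inv [set d | d \in Delta] ->
  (exists W : G -> R[i], homogeneous_scalar_QW mul inv Delta W) ->
  forall d1 d2, d1 \in Delta -> d2 \in Delta -> d1 != d2 ->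
  exists d3 d4, [/\ d3 \in Delta, d4 \in Delta, (d3, d4) != (d1, d2) &
                    mul d1 (inv d2) = mul d3 (inv d4)].
Proof.
move=> mulG Delta_uniq _ [W [W_neq0 [isoW _]]] d1 d2 d1D d2D d12.
apply: contrapT => no_other_pair.
apply: (walk_op_not_isometry mulG Delta_uniq W_neq0 d1D d2D d12)
  => [d3 d4 d3D d4D e|f /isoW[]//].
have [[-> _]//|ne] := eqVneq (d3, d4) (d1, d2).
by case: no_other_pair; exists d3, d4.
Qed.
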